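(* Robust ex-post stability does not imply ex-ante stability: there exist a set $N$ of $n$ agents and a set $O$ of $n$ objects with strict preferences $\succ_i$ over $O$ ($i\in N$) and strict priorities $\succ_o$ over $N$ ($o\in O$), and a random matching $p$, such that $p$ is robust ex-post stable but not ex-ante stable.
   Context: A random matching is an $n\times n$ bistochastic matrix $p=[p(i,o)]_{i\in N,o\in O}$ (nonnegative entries, every row and every column summing to $1$); it is deterministic if all entries lie in $\{0,1\}$. A decomposition of $p$ is a representation $p=\sum_{j=1}^k\lambda_jP_j$ with $P_j$ deterministic matchings, $\lambda_j\in(0,1]$, $\sum_j\lambda_j=1$. A deterministic matching $p$ is stable if there exist no $i,j\in N$, $o,o'\in O$ with $p(i,o')=1$, $p(j,o)=1$, $o\succ_i o'$, $i\succ_o j$. A random matching $p$ is ex-ante stable if there exist no $i,j\in N$, $o,o'\in O$ with $p(i,o')>0$, $p(j,o)>0$, $o\succ_i o'$, $i\succ_o j$; it is robust ex-post stable if every decomposition of $p$ consists only of stable deterministic matchings. *)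

From mathcomp Require Import all_boot all_order all_algebra.
From mathcomp Require Import Rstruct.
From Stdlib Require Import Reals.
Set Implicit Arguments. Unset Strict Implicit. Unset Printing Implicit Defensive.
Import Order.TTheory GRing.Theory Num.Theory.
Local Open Scope ring_scope.

Definition strict_order (T : finType) (r : rel T) : Prop :=
  (forall x, ~~ r x x) /\
  (forall x y z, r x y -> r y z -> r x z) /\
  (forall x y, x != y -> r x y || r y x).

(* a random matching: bistochastic n x n real matrix p(i,o) *)
Definition bistochastic (n : nat) (p : 'M[R]_n) : Prop :=
  (forall i o, 0 <= p i o) /\
  (forall i, \sum_(o < n) p i o = 1) /\
  (forall o, \sum_(i < n) p i o = 1).

Definition deterministic (n : nat) (p : 'M[R]_n) : Prop :=
  bistochastic p /\ (forall i o, p i o = 0 \/ p i o = 1).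

(* pref i o o' : o is strictly preferred to o' by agent i;
   prio o i j : i has strictly higher priority than j at object o *)
Definition stable_det (n : nat) (pref : 'I_n -> rel 'I_n)
  (prio : 'I_n -> rel 'I_n) (p : 'M[R]_n) : Prop :=
  ~ exists i j o o', [/\ p i o' = 1, p j o = 1, pref i o o' & prio o i j].

Definition ex_ante_stable (n : nat) (pref : 'I_n -> rel 'I_n)
  (prio : 'I_n -> rel 'I_n) (p : 'M[R]_n) : Prop :=
  ~ exists i j o o', [/\ 0 < p i o', 0 < p j o, pref i o o' & prio o i j].

Definition decomposition (n : nat) (p : 'M[R]_n) (k : nat)
  (lam : 'I_k -> R) (P : 'I_k -> 'M[R]_n) : Prop :=
  (forall j, deterministic (P j)) /\
  (forall j, 0 < lam j <= 1) /\
  (\sum_(j < k) lam j = 1) /\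
  (p = \sum_(j < k) lam j *: P j).

Definition robust_ex_post_stable (n : nat) (pref : 'I_n -> rel 'I_n)
  (prio : 'I_n -> rel 'I_n) (p : 'M[R]_n) : Prop :=
  forall (k : nat) (lam : 'I_k -> R) (P : 'I_k -> 'M[R]_n),
    decomposition p lam P -> forall j, stable_det pref prio (P j).

(* Three agents and three objects; p gives agent i the objects i and i+1 (mod 3) with
   probability 1/2 each.  Every component of a decomposition of p is a deterministic
   matching supported by p, and a blocking pair of such a matching is an ex-ante blocking
   pair of p.  With the preferences and priorities below, p has exactly one: agent 2, who
   holds object 0, prefers object 1, and has priority at object 1 over agent 1, who holds
   part of it.  But a matching supported by p that gives object 0 to agent 2 must give
   object 2 to agent 1, so it never gives object 1 to agent 1. *)
From mathcomp Require Import all_boot all_order all_algebra.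
From mathcomp Require Import Rstruct.
From Stdlib Require Import Reals.
From mathcomp Require Import lra.
Set Implicit Arguments. Unset Strict Implicit. Unset Printing Implicit Defensive.
Import Order.TTheory GRing.Theory Num.Theory.
Local Open Scope ring_scope.

Definition rank_rel (T : eqType) (l : seq T) : rel T :=
  fun x y => (index x l < index y l)%nat.

Lemma rank_rel_strict_order (T : finType) (l : seq T) :
  (forall x, x \in l) -> strict_order (rank_rel l).
Proof.
move=> inl; split; first by move=> x; rewrite /rank_rel ltnn.
split; first by move=> x y z; apply: ltn_trans.
move=> x y; apply: contraR; rewrite /rank_rel -neq_ltn negbK => /eqP eq_index.
by apply/eqP; apply: (index_inj x (inl x) (inl y)).
Qed.

Lemma decomposition_mass n k (p : 'M[R]_n) (lam : 'I_k -> R) (P : 'I_k -> 'M[R]_n)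
    j i o :
  decomposition p lam P -> P j i o = 1 -> 0 < p i o.
Proof.
case=> [detP [lam_bd [_ ->]]] Pjio; rewrite summxE (bigD1 j) //= mxE Pjio mulr1.
have [lam_gt0 _] := andP (lam_bd j).
rewrite ltr_wpDr // sumr_ge0 // => l _; rewrite mxE mulr_ge0 //.
  by have [/ltW] := andP (lam_bd l).
by have [[P_ge0 _] _] := detP l.
Qed.

Lemma robust_ex_post_stable_supported n (pref prio : 'I_n -> rel 'I_n) (p : 'M[R]_n) :
  (forall Q : 'M[R]_n, deterministic Q -> (forall i o, Q i o = 1 -> 0 < p i o) ->
     stable_det pref prio Q) ->
  robust_ex_post_stable pref prio p.
Proof.
move=> stable_supp k lam P decP j; have [detP _] := decP.
by apply: stable_supp (detP j) _ => i o /(decomposition_mass decP).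
Qed.

Definition O0 : 'I_3 := @Ordinal 3 0 isT.
Definition O1 : 'I_3 := @Ordinal 3 1 isT.
Definition O2 : 'I_3 := @Ordinal 3 2 isT.

Lemma ord3P (x : 'I_3) : [\/ x = O0, x = O1 | x = O2].
Proof.
case: x => [[|[|[|m]]] lt_m3] //.
- by apply: Or31; apply: val_inj.
- by apply: Or32; apply: val_inj.
- by apply: Or33; apply: val_inj.
Qed.

Lemma sum3 (F : 'I_3 -> R) : \sum_(i < 3) F i = F O0 + F O1 + F O2.
Proof.
by rewrite !big_ord_recr big_ord0 /= add0r; congr (F _ + F _ + F _); apply: val_inj.
Qed.

Definition pref_list (i : 'I_3) : seq 'I_3 :=
  if i == O2 then [:: O2; O1; O0] else [:: O0; O1; O2].

Definition prio_list (o : 'I_3) : seq 'I_3 :=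
  match nat_of_ord o with
  | 0 => [:: O2; O0; O1]
  | 1 => [:: O0; O2; O1]
  | _ => [:: O0; O1; O2]
  end.

Definition pref3 (i : 'I_3) : rel 'I_3 := rank_rel (pref_list i).
Definition prio3 (o : 'I_3) : rel 'I_3 := rank_rel (prio_list o).

Definition half_cycle : 'M[R]_3 :=
  \matrix_(i, o) if o \in [:: i; ordS i] then 2^-1 else 0.

Lemma half_cycle_gt0 i o : (0 < half_cycle i o) = (o \in [:: i; ordS i]).
Proof. by rewrite mxE; case: ifP; rewrite ?ltxx // invr_gt0 ltr0n. Qed.

Lemma half_cycle_bistochastic : bistochastic half_cycle.
Proof.
split=> [i o|]; first by rewrite mxE; case: ifP; rewrite // invr_ge0 ler0n.
by split=> [i|o]; rewrite sum3 !mxE; [case: (ord3P i) | case: (ord3P o)] => -> /=; lra.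
Qed.

Lemma half_cycle_ex_ante_block i j o o' :
  [/\ 0 < half_cycle i o', 0 < half_cycle j o, pref3 i o o' & prio3 o i j] ->
  [/\ i = O2, j = O1, o = O1 & o' = O0].
Proof.
rewrite !half_cycle_gt0.
by case: (ord3P i) => ->; case: (ord3P j) => ->; case: (ord3P o) => ->;
  case: (ord3P o') => -> [].
Qed.

Lemma half_cycle_supported_stable Q :
  deterministic Q -> (forall i o, Q i o = 1 -> 0 < half_cycle i o) ->
  stable_det pref3 prio3 Q.
Proof.
move=> [[Q_ge0 [rowQ colQ]] Q01] Qsupp [i [j [o [o' [Qio' Qjo pref_o prio_o]]]]].
have [Ei Ej Eo Eo'] := half_cycle_ex_ante_block
  (And4 (Qsupp _ _ Qio') (Qsupp _ _ Qjo) pref_o prio_o).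
subst i j o o'.
have Q02 : Q O0 O2 = 0.
  by case: (Q01 O0 O2) => // /Qsupp; rewrite half_cycle_gt0.
(* Row 1 forces Q 1 2 = 0, column 2 then forces Q 2 2 = 1, which overfills row 2. *)
have := rowQ O1; have := rowQ O2; have := colQ O2; rewrite !sum3.
have := Q_ge0 O1 O0; have := Q_ge0 O1 O2; have := Q_ge0 O2 O1.
lra.
Qed.

Theorem proposition4 :
  exists (n : nat) (pref : 'I_n -> rel 'I_n) (prio : 'I_n -> rel 'I_n)
         (p : 'M[R]_n),
    (forall i, strict_order (pref i)) /\
    (forall o, strict_order (prio o)) /\
    bistochastic p /\
    robust_ex_post_stable pref prio p /\
    ~ ex_ante_stable pref prio p.
Proof.
exists 3%N, pref3, prio3, half_cycle.
split; [|split; [|split; [|split]]].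
- move=> i; apply: rank_rel_strict_order => x.
  by case: (ord3P i) => ->; case: (ord3P x) => ->.
- move=> o; apply: rank_rel_strict_order => x.
  by case: (ord3P o) => ->; case: (ord3P x) => ->.
- exact: half_cycle_bistochastic.
- exact: robust_ex_post_stable_supported half_cycle_supported_stable.
- by apply; exists O2, O1, O1, O0; rewrite !half_cycle_gt0.
Qed.
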